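(* There is a semigroup which is not moving but in which the proper IP sets are partition regular (for every proper IP set $A$ and every partition of $A$ into finitely many pieces, some piece is a proper IP set).
   Context: Semigroups are written additively and are not assumed commutative. An infinite semigroup $S$ is moving if for each infinite $A\subseteq S$ and each finite $F\subseteq S$ there are $a_1,\dotsc,a_k\in A$ such that $\{a_1+s,\dotsc,a_k+s\}\not\subseteq F$ for all but finitely many $s\in S$. For a sequence $a_1,a_2,\dotsc$, $\mathrm{FS}(a_1,a_2,\dotsc):=\{a_{i_1}+\dotsb+a_{i_m}: m\ge1,\ i_1<\dotsb<i_m\}$; a proper IP set is a set containing $\mathrm{FS}(b_1,b_2,\dotsc)$ for some injective sequence $b_1,b_2,\dotsc$. *)

From Stdlib Require Import List Sorting.Sorted Arith.
Import ListNotations.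

Section Semigroup.
Context {S : Type} (op : S -> S -> S).

Definition finite_set (A : S -> Prop) : Prop :=
  exists l : list S, forall x, A x -> In x l.

Definition infinite_set (A : S -> Prop) : Prop := ~ finite_set A.

(* S is moving (S assumed infinite): for each infinite A and finite F there are
   a_1..a_k in A such that {a_1+s,...,a_k+s} is not contained in F for all but
   finitely many s, i.e. the set of s with {a_i + s} ⊆ F is finite. *)
Definition moving : Prop :=
  forall (A F : S -> Prop), infinite_set A -> finite_set F ->
    exists l : list S, (forall a, In a l -> A a) /\
      finite_set (fun s => forall a, In a l -> F (op a s)).

Fixpoint lsum (b : nat -> S) (i : nat) (l : list nat) : S :=
  match l with
  | [] => b i
  | j :: l' => op (b i) (lsum b j l')
  end.

Definition FS (b : nat -> S) (x : S) : Prop :=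
  exists (i : nat) (l : list nat), Sorted lt (i :: l) /\ x = lsum b i l.

Definition proper_IP (A : S -> Prop) : Prop :=
  exists b : nat -> S, (forall m n, b m = b n -> m = n) /\
    (forall x, FS b x -> A x).

Definition proper_IP_partition_regular : Prop :=
  forall A : S -> Prop, proper_IP A ->
  forall (n : nat) (c : S -> nat), (forall x, A x -> c x < n) ->
    exists i, i < n /\ proper_IP (fun x => A x /\ c x = i).

End Semigroup.

From Stdlib Require Import List Arith Bool Lia Classical ClassicalEpsilon.
Import ListNotations.

(* On the naturals put x + y := 0 if x is even and y is odd, and y otherwise.
   Each parity class is a right-zero subsemigroup, so a finite sum of terms of
   one parity is just its last term: FS(b) is the range of b when b has constant
   parity, and partition
   regularity of proper IP sets reduces to the infinite pigeonhole principle
   applied to colour and parity.  The semigroup is not moving because every even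
   a sends every odd s to 0: take A the even numbers and F = {0}. *)

Definition unbounded (P : nat -> Prop) : Prop :=
  forall m, exists n, m <= n /\ P n.

Definition increasing (g : nat -> nat) : Prop :=
  forall m n, m < n -> g m < g n.

Lemma increasing_inj (g : nat -> nat) : increasing g -> forall m n, g m = g n -> m = n.
Proof.
  intros Hg m n E.
  destruct (lt_eq_lt_dec m n) as [[H|H]|H]; [specialize (Hg _ _ H) | | specialize (Hg _ _ H)]; lia.
Qed.

Lemma finite_set_bounded (A : nat -> Prop) :
  finite_set A -> exists m, forall x, A x -> x < m.
Proof.
  intros [l Hl]; exists (S (list_max l)); intros x Ax.
  assert (Hmax : Forall (fun k => k <= list_max l) l) by (apply list_max_le; lia).
  rewrite Forall_forall in Hmax; specialize (Hmax x (Hl x Ax)); lia.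
Qed.

Lemma unbounded_infinite (A : nat -> Prop) : unbounded A -> infinite_set A.
Proof.
  intros HA Hfin; destruct (finite_set_bounded A Hfin) as [m Hm].
  destruct (HA m) as [n [Hmn An]]; specialize (Hm n An); lia.
Qed.

Lemma unbounded_pigeonhole (f : nat -> nat) (N : nat) :
  unbounded (fun n => f n < N) -> exists k, k < N /\ unbounded (fun n => f n = k).
Proof.
  induction N as [|N IH]; intros Hf.
  - destruct (Hf 0) as [n [_ Hn]]; lia.
  - destruct (classic (unbounded (fun n => f n = N))) as [HN|HN].
    + exists N; split; [lia | exact HN].
    + apply not_all_ex_not in HN as [M HM].
      destruct IH as [k [Hk Hunb]].
      * intros m; destruct (Hf (m + M)) as [n [Hn Hfn]].
        exists n; split; [lia|].
        destruct (Nat.eq_dec (f n) N) as [E|]; [|lia].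
        exfalso; apply HM; exists n; split; [lia | exact E].
      * exists k; split; [lia | exact Hunb].
Qed.

Lemma unbounded_enum (P : nat -> Prop) :
  unbounded P -> exists g, increasing g /\ forall n, P (g n).
Proof.
  intros HP.
  assert (Hpick : forall m, {n | m <= n /\ P n})
    by (intro m; apply constructive_indefinite_description, HP).
  set (h m := proj1_sig (Hpick m)).
  assert (Hh : forall m, m <= h m /\ P (h m)) by (intro m; exact (proj2_sig (Hpick m))).
  set (g := fix g k := match k with 0 => h 0 | S k' => h (S (g k')) end).
  assert (Hstep : forall k, g k < g (S k)) by (intro k; apply (Hh (S (g k)))).
  exists g; split.
  - intros m n Hmn; induction Hmn; [apply Hstep | specialize (Hstep m0); lia].
  - intros [|n]; apply Hh.
Qed.

Lemma pigeonhole_subsequence (f : nat -> nat) (N : nat) :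
  (forall n, f n < N) -> exists k g, k < N /\ increasing g /\ forall n, f (g n) = k.
Proof.
  intros Hf.
  destruct (unbounded_pigeonhole f N) as [k [Hk Hunb]].
  { intro m; exists m; split; [lia | apply Hf]. }
  destruct (unbounded_enum _ Hunb) as [g [Hg Hfg]].
  exists k, g; auto.
Qed.

Section RightZeroClasses.

Context {S : Type} (op : S -> S -> S) (kind : S -> nat) (K : nat).
Hypothesis kind_lt : forall x, kind x < K.
Hypothesis op_same_kind : forall x y, kind x = kind y -> op x y = y.

Lemma lsum_same_kind (b : nat -> S) (q : nat) :
  (forall n, kind (b n) = q) -> forall l i, exists n, lsum op b i l = b n.
Proof.
  intros Hq l; induction l as [|j l IH]; intro i; simpl.
  - exists i; reflexivity.
  - destruct (IH j) as [n ->]; exists n.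
    apply op_same_kind; rewrite !Hq; reflexivity.
Qed.

Lemma FS_same_kind (b : nat -> S) (q : nat) :
  (forall n, kind (b n) = q) -> forall x, FS op b x -> exists n, x = b n.
Proof.
  intros Hq x [i [l [_ ->]]]; exact (lsum_same_kind b q Hq l i).
Qed.

Theorem right_zero_classes_partition_regular : proper_IP_partition_regular op.
Proof.
  intros A [b [Hinj HFS]] N c Hc.
  assert (Ab : forall n, A (b n)).
  { intro n; apply HFS; exists n, []; split; [repeat constructor | reflexivity]. }
  destruct (pigeonhole_subsequence (fun n => c (b n)) N) as [k [g1 [Hk [Hg1 Hcol]]]].
  { intro n; apply Hc, Ab. }
  destruct (pigeonhole_subsequence (fun n => kind (b (g1 n))) K) as [q [g2 [_ [Hg2 Hkind]]]].
  { intro n; apply kind_lt. }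
  exists k; split; [exact Hk|].
  exists (fun n => b (g1 (g2 n))); split.
  - intros m n E; apply Hinj, (increasing_inj _ Hg1), (increasing_inj _ Hg2) in E; exact E.
  - intros x Hx; destruct (FS_same_kind _ q Hkind x Hx) as [n ->].
    split; [apply Ab | apply Hcol].
Qed.

End RightZeroClasses.

Definition opn (x y : nat) : nat :=
  if Nat.even x && negb (Nat.even y) then 0 else y.

Lemma opn_assoc (x y z : nat) : opn x (opn y z) = opn (opn x y) z.
Proof.
  unfold opn.
  destruct (Nat.even x) eqn:Ex, (Nat.even y) eqn:Ey, (Nat.even z) eqn:Ez;
    simpl; rewrite ?Ex, ?Ey, ?Ez; reflexivity.
Qed.

Lemma opn_same_parity (x y : nat) : Nat.even x = Nat.even y -> opn x y = y.
Proof.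
  unfold opn; intros ->; destruct (Nat.even y); reflexivity.
Qed.

Lemma opn_not_moving : ~ moving opn.
Proof.
  intros Hmov.
  destruct (Hmov (fun x => Nat.even x = true) (fun x => x = 0)) as [l [Hl Hfin]].
  - apply unbounded_infinite; intro m; exists (2 * m); split; [lia | apply Nat.even_mul].
  - exists [0]; intros x ->; left; reflexivity.
  - apply (unbounded_infinite (fun s => forall a, In a l -> opn a s = 0)); [|exact Hfin].
    intro m; exists (2 * m + 1); split; [lia|].
    intros a Ha; unfold opn; rewrite (Hl a Ha), Nat.even_add, Nat.even_mul; reflexivity.
Qed.

Theorem corollary4p1 :
  exists (S : Type) (op : S -> S -> S),
    (forall x y z : S, op x (op y z) = op (op x y) z) /\
    infinite_set (fun _ : S => True) /\
    ~ moving op /\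
    proper_IP_partition_regular op.
Proof.
  exists nat, opn; split; [exact opn_assoc|]; split; [|split].
  - apply unbounded_infinite; intro m; exists m; split; [lia | exact I].
  - exact opn_not_moving.
  - apply (right_zero_classes_partition_regular opn (fun x => Nat.b2n (Nat.even x)) 2).
    + intro x; destruct (Nat.even x); simpl; lia.
    + intros x y E; apply opn_same_parity.
      destruct (Nat.even x), (Nat.even y); simpl in E; congruence.
Qed.
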